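(* Let $m\ge2$, $q\ge2$ be integers, $\Omega$ a nonempty closed subset of $\Sigma_m$, $\overline{t}$ the unique vector in $[1,m^{1/(q-1)}]^{\mathrm{Pref}(\Omega)}$ with $t_u^q=\sum_{j:\,uj\in\mathrm{Pref}(\Omega)}t_{uj}$, $\mu$ the probability measure on $\Omega$ with $\mu[u]=\prod_{j=1}^k t_{u_1\cdots u_j}/t^q_{u_1\cdots u_{j-1}}$ for $u\in\mathrm{Pref}_k(\Omega)$, and $\mathbb{P}_\mu$ the corresponding measure on $X_\Omega$. For $x\in X_\Omega$ and $\ell\ge1$ put $$a_\ell(x):=\frac{-\log_m\mathbb{P}_\mu[x_1^{n}]}{n},\qquad n=q^\ell.$$ Then for every $x\in X_\Omega$, $$\lim_{\ell\to\infty}\frac{a_1(x)+\cdots+a_\ell(x)}{\ell}=(q-1)\log_m t_\varnothing,$$ and in particular $\liminf_{\ell\to\infty}a_\ell(x)\le(q-1)\log_m t_\varnothing$ for every $x\in X_\Omega$.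
   Context: $\Sigma_m=\{0,\dots,m-1\}^{\mathbb N}$; $[u]$ is the cylinder of sequences beginning with word $u$; $x_1^n=x_1\cdots x_n$. $\mathrm{Pref}_0(\Omega)=\{\varnothing\}$, $\mathrm{Pref}_k(\Omega)=\{u\in\{0,\dots,m-1\}^k:\ \Omega\cap[u]\ne\emptyset\}$, $\mathrm{Pref}(\Omega)=\bigcup_k\mathrm{Pref}_k(\Omega)$. $X_\Omega := \{x\in\Sigma_m:\ (x_{iq^\ell})_{\ell\ge0}\in\Omega \text{ for all } i\ge1,\ q\nmid i\}$. For $q\nmid i$, $J_i=\{q^ri\}_{r\ge0}$ and $u|J_i=u_iu_{qi}\cdots u_{q^ri}$ with $q^ri\le|u|<q^{r+1}i$; $\mathbb{P}_\mu[u]=\prod_{i\le|u|,\,q\nmid i}\mu[u|J_i]$. *)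

From Stdlib Require Import Reals Lra Lia Arith List ClassicalEpsilon.
Import ListNotations.
Open Scope R_scope.

(* Sequences in Sigma_m are functions x : nat -> nat, 0-based:
   the paper's x_i (i >= 1) is (x (i-1)). Words are lists of nat. *)
Definition in_Sigma (m : nat) (x : nat -> nat) : Prop := forall k, (x k < m)%nat.

(* Omega is a predicate on sequences. Closed in the product topology. *)
Definition closed_Sigma (m : nat) (Om : (nat -> nat) -> Prop) : Prop :=
  forall x, in_Sigma m x ->
    (forall k, exists w, Om w /\ forall j, (j < k)%nat -> w j = x j) -> Om x.

Definition Pref (Om : (nat -> nat) -> Prop) (u : list nat) : Prop :=
  exists w, Om w /\ forall j, (j < length u)%nat -> nth j u 0%nat = w j.

Definition Pind (P : Prop) : R :=
  if excluded_middle_informative P then 1 else 0.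

Definition Rsum_list (l : list R) : R := fold_right Rplus 0 l.
Definition Rprod_list (l : list R) : R := fold_right Rmult 1 l.

Definition logb (m : nat) (y : R) : R := ln y / ln (INR m).

Definition t_condition (m q : nat) (Om : (nat -> nat) -> Prop)
  (t : list nat -> R) : Prop :=
  forall u, Pref Om u ->
    1 <= t u <= Rpower (INR m) (/ (INR q - 1)) /\
    t u ^ q = Rsum_list (map (fun j => Pind (Pref Om (u ++ [j])) * t (u ++ [j]))
                              (seq 0 m)).

(* mu[u] = prod_{j=1}^k t_{u_1..u_j} / t_{u_1..u_{j-1}}^q for u in Pref_k(Omega),
   and mu[u] = 0 for u not in Pref(Omega) (cylinder not meeting Omega). *)
Definition mu_cyl (q : nat) (Om : (nat -> nat) -> Prop) (t : list nat -> R)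
  (u : list nat) : R :=
  Pind (Pref Om u) *
  Rprod_list (map (fun j => t (firstn j u) / t (firstn (j - 1) u) ^ q)
                  (seq 1 (length u))).

Definition X_Om (m q : nat) (Om : (nat -> nat) -> Prop) (x : nat -> nat) : Prop :=
  in_Sigma m x /\
  forall i, (1 <= i)%nat -> Nat.modulo i q <> 0%nat ->
    Om (fun l => x (i * q ^ l - 1)%nat).

(* (x_1^n)|J_i = x_i x_{qi} ... x_{q^r i}, q^r i <= n < q^(r+1) i.
   (For q >= 2, i >= 1 all exponents s with q^s i <= n satisfy s <= n.) *)
Definition restrJ (q : nat) (x : nat -> nat) (n i : nat) : list nat :=
  map (fun s => x (q ^ s * i - 1)%nat)
      (filter (fun s => Nat.leb (q ^ s * i) n) (seq 0 (S n))).

Definition Pmu_prefix (q : nat) (Om : (nat -> nat) -> Prop) (t : list nat -> R)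
  (x : nat -> nat) (n : nat) : R :=
  Rprod_list (map (fun i => mu_cyl q Om t (restrJ q x n i))
                  (filter (fun i => negb (Nat.eqb (Nat.modulo i q) 0)) (seq 1 n))).

Definition a_seq (m q : nat) (Om : (nat -> nat) -> Prop) (t : list nat -> R)
  (x : nat -> nat) (l : nat) : R :=
  - logb m (Pmu_prefix q Om t x (q ^ l)) / INR (q ^ l).

From Pilot Require Import Defs.
From Stdlib Require Import Reals List Arith Lia Lra Classical ClassicalEpsilon.
Import ListNotations.
Open Scope R_scope.

(* Let lnt i j be ln t of the first j letters x_i x_{qi} ... of x along J_i, and let
   Lambda n be the sum of lnt i j over all positions q^j i <= n with q not dividing i.
   Along each J_i the product formula for mu telescopes, and passing from n to qn
   extends every J_i-word by one letter and starts (q-1)n new ones of length 1, so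
     ln P_mu[x_1^n] = Lambda (qn) - q Lambda n - (q-1) n ln t_empty.
   With b_l = q Lambda(q^l) / (q^l ln m) this reads a_l = b_l - b_{l+1} + (q-1) log_m t_empty,
   and 1 <= t <= m^(1/(q-1)) keeps b_l bounded.  Hence the Cesaro means of a_l converge to
   (q-1) log_m t_empty, and a_l cannot stay above that value by a fixed margin. *)

Lemma Rsum_list_app (l1 l2 : list R) :
  Rsum_list (l1 ++ l2) = Rsum_list l1 + Rsum_list l2.
Proof. unfold Rsum_list; induction l1; cbn; lra. Qed.

Lemma Rsum_list_cons (y : R) (l : list R) : Rsum_list (y :: l) = y + Rsum_list l.
Proof. reflexivity. Qed.

Lemma Rsum_map_plus (A : Type) (f g : A -> R) (l : list A) :
  Rsum_list (map (fun y => f y + g y) l) = Rsum_list (map f l) + Rsum_list (map g l).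
Proof. unfold Rsum_list; induction l; cbn; lra. Qed.

Lemma Rsum_map_scal (A : Type) (c : R) (f : A -> R) (l : list A) :
  Rsum_list (map (fun y => c * f y) l) = c * Rsum_list (map f l).
Proof. unfold Rsum_list; induction l as [|y l IH]; cbn; [ring | rewrite IH; ring]. Qed.

Lemma Rsum_map_const (A : Type) (c : R) (l : list A) :
  Rsum_list (map (fun _ => c) l) = INR (length l) * c.
Proof.
  unfold Rsum_list; induction l as [|y l IH]; cbn [map fold_right length].
  - cbn; ring.
  - rewrite S_INR, IH; ring.
Qed.

Lemma Rsum_map_le (A : Type) (f g : A -> R) (l : list A) :
  (forall y, In y l -> f y <= g y) -> Rsum_list (map f l) <= Rsum_list (map g l).
Proof.
  unfold Rsum_list; induction l as [|y l IH]; cbn; intros Hfg; [lra|].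
  assert (f y <= g y) by auto. assert (IH' := IH (fun z Hz => Hfg z (or_intror Hz))). lra.
Qed.

Lemma Rsum_map_nonneg (A : Type) (f : A -> R) (l : list A) :
  (forall y, In y l -> 0 <= f y) -> 0 <= Rsum_list (map f l).
Proof.
  intros Hf. rewrite <- (Rmult_0_r (INR (length l))), <- Rsum_map_const.
  now apply Rsum_map_le.
Qed.

Lemma Rsum_seq_S (f : nat -> R) (k n : nat) :
  Rsum_list (map f (seq k (S n))) = Rsum_list (map f (seq k n)) + f (k + n)%nat.
Proof. rewrite seq_S, map_app, Rsum_list_app. cbn. lra. Qed.

Lemma Rsum_seq_shift (f : nat -> R) (n : nat) :
  Rsum_list (map f (seq 1 n)) = Rsum_list (map f (seq 0 n)) + f n - f 0%nat.
Proof.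
  assert (H := Rsum_seq_S f 0 n). cbn [seq map] in H. unfold Rsum_list in *. cbn in H. lra.
Qed.

Lemma ln_Rprod_list (A : Type) (f : A -> R) (l : list A) :
  (forall y, In y l -> 0 < f y) ->
  0 < Rprod_list (map f l) /\
  ln (Rprod_list (map f l)) = Rsum_list (map (fun y => ln (f y)) l).
Proof.
  unfold Rprod_list, Rsum_list; induction l as [|y l IH]; cbn; intros Hf.
  - split; [lra | apply ln_1].
  - destruct (IH (fun z Hz => Hf z (or_intror Hz))) as [Hpos Hln].
    assert (0 < f y) by auto.
    split; [now apply Rmult_lt_0_compat | now rewrite ln_mult, Hln].
Qed.

Lemma ln_le_ln (a b : R) : 0 < a -> a <= b -> ln a <= ln b.
Proof.
  intros Ha [Hab | ->]; [left; now apply ln_increasing | lra].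
Qed.

Lemma Rabs_le_bounds (x c : R) : Rabs x <= c -> - c <= x <= c.
Proof. intros H. assert (H1 := Rle_abs x). assert (H2 := Rle_abs (- x)). rewrite Rabs_Ropp in H2. lra. Qed.

Section Telescoping.

Variables (a b : nat -> R) (L C : R).
Hypothesis a_telescopes : forall l, a l = b l - b (S l) + L.
Hypothesis b_bounded : forall l, Rabs (b l) <= C.

Lemma Rsum_telescope (k n : nat) :
  Rsum_list (map a (seq k n)) = b k - b (k + n)%nat + INR n * L.
Proof.
  induction n as [|n IH].
  - rewrite Nat.add_0_r. cbn. unfold Rsum_list. cbn. lra.
  - rewrite Rsum_seq_S, IH, a_telescopes, S_INR.
    replace (S (k + n)) with (k + S n)%nat by lia. lra.
Qed.

Lemma telescope_remainder_bound (k n : nat) :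
  Rabs (Rsum_list (map a (seq k n)) - INR n * L) <= 2 * C.
Proof.
  rewrite Rsum_telescope.
  assert (Hk := b_bounded k). assert (Hn := b_bounded (k + n)).
  apply Rabs_le_bounds in Hk, Hn. apply Rabs_le. lra.
Qed.

Lemma cesaro_mean_cv : Un_cv (fun l => Rsum_list (map a (seq 1 l)) / INR l) L.
Proof.
  intros eps Heps.
  destruct (INR_archimed eps (2 * C) Heps) as [N HN].
  exists (S N). intros n Hn. unfold R_dist.
  assert (Hn0 : 0 < INR n) by (apply lt_0_INR; lia).
  assert (HNn : INR N <= INR n) by (apply le_INR; lia).
  assert (Hrem := telescope_remainder_bound 1 n).
  replace (Rsum_list (map a (seq 1 n)) / INR n - L)
    with ((Rsum_list (map a (seq 1 n)) - INR n * L) / INR n) by (field; lra).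
  unfold Rdiv. rewrite Rabs_mult, Rabs_inv, (Rabs_pos_eq (INR n)) by lra.
  apply (Rmult_lt_reg_r (INR n)); [lra|].
  rewrite Rmult_assoc, Rinv_l by lra. nra.
Qed.

Lemma frequently_le_limit (eps : R) : 0 < eps ->
  forall N, exists l, (N <= l)%nat /\ (1 <= l)%nat /\ a l <= L + eps.
Proof.
  intros Heps N. apply NNPP. intros Hnone.
  assert (Hbig : forall l, (Nat.max N 1 <= l)%nat -> L + eps <= a l).
  { intros l Hl. apply Rnot_lt_le. intros Hlt.
    apply Hnone. exists l. repeat split; [lia | lia | lra]. }
  destruct (INR_archimed eps (2 * C) Heps) as [n Hn].
  assert (Hsum : Rsum_list (map (fun _ => L + eps) (seq (Nat.max N 1) n))
                 <= Rsum_list (map a (seq (Nat.max N 1) n))).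
  { apply Rsum_map_le. intros l Hl. apply in_seq in Hl. apply Hbig. lia. }
  rewrite Rsum_map_const, length_seq in Hsum.
  assert (Hrem := telescope_remainder_bound (Nat.max N 1) n).
  apply Rabs_le_bounds in Hrem. lra.
Qed.

End Telescoping.

Lemma filter_seq0_downward_closed (P : nat -> bool) (N : nat) :
  (forall s s', (s' <= s)%nat -> P s = true -> P s' = true) ->
  filter P (seq 0 N) = seq 0 (length (filter P (seq 0 N))).
Proof.
  intros Hdown. induction N as [|N IH]; [reflexivity|].
  rewrite seq_S, filter_app. cbn [filter]. destruct (P (0 + N)%nat) eqn:HN.
  - rewrite forallb_filter_id.
    + rewrite length_app, length_seq, Nat.add_1_r. now rewrite seq_S.
    + apply forallb_forall. intros s Hs. apply in_seq in Hs. apply (Hdown N); [lia | exact HN].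
  - now rewrite !app_nil_r.
Qed.

Definition heads (q n : nat) : list nat :=
  filter (fun i => negb (Nat.eqb (Nat.modulo i q) 0)) (seq 1 n).

Definition depth (q n i : nat) : nat :=
  length (filter (fun s => Nat.leb (q ^ s * i) n) (seq 0 (S n))).

Definition jword (q : nat) (x : nat -> nat) (i k : nat) : list nat :=
  map (fun s => x (q ^ s * i - 1)%nat) (seq 0 k).

Lemma in_heads (q n i : nat) :
  In i (heads q n) <-> (1 <= i <= n)%nat /\ Nat.modulo i q <> 0%nat.
Proof.
  unfold heads. rewrite filter_In, in_seq, Bool.negb_true_iff, Nat.eqb_neq. lia.
Qed.

Lemma length_heads_le (q n : nat) : (length (heads q n) <= n)%nat.
Proof. unfold heads. rewrite <- (length_seq n 1) at 2. apply filter_length_le. Qed.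

Lemma heads_mul_split (q n : nat) : (1 <= q)%nat ->
  exists r, heads q (q * n) = heads q n ++ r /\
            forall i, In i r -> (n < i <= q * n)%nat.
Proof.
  intros Hq. exists (filter (fun i => negb (Nat.eqb (Nat.modulo i q) 0)) (seq (1 + n) (q * n - n))).
  split.
  - unfold heads. rewrite <- filter_app, <- seq_app. do 2 f_equal. nia.
  - intros i Hi. apply filter_In in Hi as [Hi _]. apply in_seq in Hi. lia.
Qed.

Lemma length_heads_mul (q n : nat) : (2 <= q)%nat ->
  length (heads q (q * n)) = ((q - 1) * n)%nat.
Proof.
  intros Hq. induction n as [|n IH]; [now rewrite Nat.mul_0_r|].
  unfold heads in *. replace (q * S n)%nat with (q * n + (q - 1) + 1)%nat by nia.
  rewrite !seq_app, !filter_app, !length_app, IH, forallb_filter_id.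
  - replace (1 + (q * n + (q - 1)))%nat with (S n * q)%nat by nia.
    cbn [seq filter]. rewrite Nat.Div0.mod_mul, length_seq. cbn [negb Nat.eqb length]. nia.
  - apply forallb_forall. intros y Hy. apply in_seq in Hy.
    apply Bool.negb_true_iff, Nat.eqb_neq.
    replace y with ((y - q * n) + n * q)%nat by nia.
    rewrite Nat.Div0.mod_add, Nat.mod_small; lia.
Qed.

Lemma heads_one (q : nat) : (2 <= q)%nat -> heads q 1 = [1%nat].
Proof. intros Hq. unfold heads. cbn. rewrite Nat.mod_small by lia. reflexivity. Qed.

Section Depth.

Variable q : nat.
Hypothesis hq : (2 <= q)%nat.

Lemma pow_mul_leb_downward_closed (n i s s' : nat) : (s' <= s)%nat ->
  Nat.leb (q ^ s * i) n = true -> Nat.leb (q ^ s' * i) n = true.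
Proof.
  intros Hs Hle. apply Nat.leb_le in Hle. apply Nat.leb_le.
  enough (q ^ s' <= q ^ s)%nat by nia. apply Nat.pow_le_mono_r; lia.
Qed.

Lemma depth_spec (n i s : nat) : (1 <= i)%nat ->
  (q ^ s * i <= n)%nat <-> (s < depth q n i)%nat.
Proof.
  intros Hi. unfold depth.
  set (F := filter (fun s => Nat.leb (q ^ s * i) n) (seq 0 (S n))).
  assert (HF : F = seq 0 (length F)).
  { apply filter_seq0_downward_closed, pow_mul_leb_downward_closed. }
  transitivity (In s F).
  - unfold F. rewrite filter_In, in_seq, Nat.leb_le.
    assert (Hs := Nat.pow_gt_lin_r q s ltac:(lia)). split; [nia | tauto].
  - rewrite HF at 1. rewrite in_seq. lia.
Qed.

Lemma depth_unique (n i k : nat) : (1 <= i)%nat ->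
  (forall s, (q ^ s * i <= n)%nat <-> (s < k)%nat) -> depth q n i = k.
Proof.
  intros Hi Hk.
  destruct (Nat.lt_trichotomy (depth q n i) k) as [Hlt | [Heq | Hlt]]; [|exact Heq|].
  - apply Hk, depth_spec in Hlt; lia.
  - apply depth_spec, Hk in Hlt; lia.
Qed.

Lemma depth_mul_old (n i : nat) : (1 <= i <= n)%nat ->
  depth q (q * n) i = S (depth q n i).
Proof.
  intros Hi. apply depth_unique; [lia|]. intros [|s].
  - cbn. nia.
  - rewrite Nat.pow_succ_r', <- Nat.mul_assoc, <- Nat.mul_le_mono_pos_l by lia.
    rewrite depth_spec by lia. lia.
Qed.

Lemma depth_mul_new (n i : nat) : (n < i <= q * n)%nat -> depth q (q * n) i = 1%nat.
Proof.
  intros Hi. apply depth_unique; [lia|]. intros [|s].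
  - cbn. lia.
  - split; [|lia]. rewrite Nat.pow_succ_r', <- Nat.mul_assoc.
    rewrite <- Nat.mul_le_mono_pos_l by lia. intros Hle.
    assert (1 <= q ^ s)%nat by (apply Nat.neq_0_lt_0, Nat.pow_nonzero; lia). nia.
Qed.

Lemma depth_one : depth q 1 1 = 1%nat.
Proof. destruct q as [|[|q']]; [lia | lia | reflexivity]. Qed.

Lemma restrJ_jword (x : nat -> nat) (n i : nat) :
  restrJ q x n i = jword q x i (depth q n i).
Proof.
  unfold restrJ, jword, depth. f_equal.
  apply filter_seq0_downward_closed, pow_mul_leb_downward_closed.
Qed.

End Depth.

Lemma length_jword (q : nat) (x : nat -> nat) (i k : nat) : length (jword q x i k) = k.
Proof. unfold jword. now rewrite length_map, length_seq. Qed.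

Lemma firstn_jword (q : nat) (x : nat -> nat) (i j k : nat) : (j <= k)%nat ->
  firstn j (jword q x i k) = jword q x i j.
Proof.
  intros Hjk. unfold jword. rewrite firstn_map. f_equal.
  replace k with (j + (k - j))%nat by lia.
  rewrite seq_app, firstn_app, firstn_all2, length_seq, Nat.sub_diag by (rewrite length_seq; lia).
  apply app_nil_r.
Qed.

Section Entropy.

Variables (m q : nat) (Om : (nat -> nat) -> Prop) (t : list nat -> R) (x : nat -> nat).
Hypotheses (hm : (2 <= m)%nat) (hq : (2 <= q)%nat)
  (ht : t_condition m q Om t) (hx : X_Om m q Om x).

Lemma Pref_jword (i k : nat) : (1 <= i)%nat -> Nat.modulo i q <> 0%nat ->
  Pref Om (jword q x i k).
Proof.
  intros Hi Hiq. exists (fun l => x (i * q ^ l - 1)%nat). split; [now apply hx|].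
  intros j Hj. rewrite length_jword in Hj. unfold jword.
  rewrite nth_indep with (d' := (fun s => x (q ^ s * i - 1)%nat) 0%nat)
    by (rewrite length_map, length_seq; lia).
  rewrite (map_nth (fun s => x (q ^ s * i - 1)%nat)), seq_nth by lia.
  cbn. now rewrite Nat.mul_comm.
Qed.

Definition lnt (i j : nat) : R := ln (t (jword q x i j)).

Definition lnt_max : R := ln (Rpower (INR m) (/ (INR q - 1))).

Lemma t_jword_bounds (i k : nat) : (1 <= i)%nat -> Nat.modulo i q <> 0%nat ->
  1 <= t (jword q x i k) <= Rpower (INR m) (/ (INR q - 1)).
Proof. intros Hi Hiq. exact (proj1 (ht _ (Pref_jword i k Hi Hiq))). Qed.

Lemma lnt_bounds (i j : nat) : (1 <= i)%nat -> Nat.modulo i q <> 0%nat ->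
  0 <= lnt i j <= lnt_max.
Proof.
  intros Hi Hiq. destruct (t_jword_bounds i j Hi Hiq) as [H1 H2]. unfold lnt, lnt_max.
  rewrite <- ln_1. split; apply ln_le_ln; lra.
Qed.

Lemma lnt_nil (i : nat) : lnt i 0 = ln (t []).
Proof. reflexivity. Qed.

Lemma mu_jword (i k : nat) : (1 <= i)%nat -> Nat.modulo i q <> 0%nat ->
  mu_cyl q Om t (jword q x i k) =
  Rprod_list (map (fun j => t (jword q x i j) / t (jword q x i (j - 1)) ^ q) (seq 1 k)).
Proof.
  intros Hi Hiq. unfold mu_cyl, Defs.Pind.
  destruct (excluded_middle_informative (Pref Om (jword q x i k))) as [_ | Hnot];
    [| now contradiction (Pref_jword i k Hi Hiq)].
  rewrite Rmult_1_l, length_jword. f_equal. apply map_ext_in.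
  intros j Hj. apply in_seq in Hj. rewrite !firstn_jword by lia. reflexivity.
Qed.

Lemma ln_mu_jword (i k : nat) : (1 <= i)%nat -> Nat.modulo i q <> 0%nat ->
  0 < mu_cyl q Om t (jword q x i k) /\
  ln (mu_cyl q Om t (jword q x i k)) =
  Rsum_list (map (lnt i) (seq 1 k)) + - INR q * Rsum_list (map (lnt i) (seq 0 k)).
Proof.
  intros Hi Hiq. rewrite mu_jword by assumption.
  assert (Ht := fun j => t_jword_bounds i j Hi Hiq).
  destruct (ln_Rprod_list _ (fun j => t (jword q x i j) / t (jword q x i (j - 1)) ^ q) (seq 1 k))
    as [Hpos Hln].
  { intros j _. assert (H1 := Ht j). assert (H2 := Ht (j - 1)%nat).
    apply Rdiv_lt_0_compat; [lra | apply pow_lt; lra]. }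
  split; [exact Hpos|]. rewrite Hln, <- seq_shift, !map_map, <- Rsum_map_scal, <- Rsum_map_plus.
  f_equal. apply map_ext. intros j. cbn [Nat.sub]. rewrite Nat.sub_0_r.
  assert (H1 := Ht (S j)). assert (H2 := Ht j).
  unfold Rdiv, lnt.
  rewrite ln_mult, ln_Rinv, ln_pow by (try apply Rinv_0_lt_compat; try apply pow_lt; lra).
  ring.
Qed.

Definition Lambda (n : nat) : R :=
  Rsum_list (map (fun i => Rsum_list (map (lnt i) (seq 0 (depth q n i)))) (heads q n)).

Lemma ln_Pmu_prefix (n : nat) :
  ln (Pmu_prefix q Om t x n) =
  Rsum_list (map (fun i => Rsum_list (map (lnt i) (seq 1 (depth q n i)))) (heads q n))
  + - INR q * Lambda n.
Proof.
  unfold Pmu_prefix, Lambda. change (filter _ (seq 1 n)) with (heads q n).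
  rewrite <- Rsum_map_scal, <- Rsum_map_plus.
  assert (Hmu : forall i, In i (heads q n) ->
    0 < mu_cyl q Om t (restrJ q x n i) /\
    ln (mu_cyl q Om t (restrJ q x n i)) =
    Rsum_list (map (lnt i) (seq 1 (depth q n i)))
    + - INR q * Rsum_list (map (lnt i) (seq 0 (depth q n i)))).
  { intros i Hi. apply in_heads in Hi as [Hi Hiq].
    rewrite restrJ_jword by exact hq. now apply ln_mu_jword. }
  destruct (ln_Rprod_list _ (fun i => mu_cyl q Om t (restrJ q x n i)) (heads q n))
    as [_ ->]; [now intros i Hi; apply Hmu |].
  f_equal. apply map_ext_in. intros i Hi. now apply Hmu.
Qed.

Lemma Lambda_mul (n : nat) :
  Lambda (q * n) =
  Rsum_list (map (fun i => Rsum_list (map (lnt i) (seq 1 (depth q n i)))) (heads q n))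
  + INR (length (heads q (q * n))) * ln (t []).
Proof.
  destruct (heads_mul_split q n ltac:(lia)) as [r [Hsplit Hr]].
  unfold Lambda. rewrite Hsplit, map_app, Rsum_list_app, length_app, plus_INR.
  assert (Hold : Rsum_list (map (fun i => Rsum_list (map (lnt i) (seq 0 (depth q (q * n) i))))
                                (heads q n)) =
    Rsum_list (map (fun i => Rsum_list (map (lnt i) (seq 1 (depth q n i)))) (heads q n))
    + INR (length (heads q n)) * ln (t [])).
  { rewrite <- Rsum_map_const, <- Rsum_map_plus. f_equal. apply map_ext_in.
    intros i Hi. apply in_heads in Hi as [Hi _].
    rewrite depth_mul_old by lia. cbn [seq map]. rewrite Rsum_list_cons, lnt_nil. ring. }
  assert (Hnew : Rsum_list (map (fun i => Rsum_list (map (lnt i) (seq 0 (depth q (q * n) i)))) r)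
                 = INR (length r) * ln (t [])).
  { rewrite <- Rsum_map_const. f_equal. apply map_ext_in. intros i Hi.
    rewrite depth_mul_new by (exact hq || apply Hr, Hi). cbn [seq map].
    rewrite Rsum_list_cons, lnt_nil. cbn. ring. }
  rewrite Hold, Hnew. ring.
Qed.

Lemma ln_Pmu_prefix_Lambda (n : nat) :
  ln (Pmu_prefix q Om t x n) =
  Lambda (q * n) - INR q * Lambda n - INR ((q - 1) * n) * ln (t []).
Proof. rewrite ln_Pmu_prefix, Lambda_mul, length_heads_mul by exact hq. ring. Qed.

Lemma ln_t_nil_bounds : 0 <= ln (t []) <= lnt_max.
Proof.
  rewrite <- (lnt_nil 1). apply lnt_bounds; [lia|]. rewrite Nat.mod_small; lia.
Qed.

Lemma Lambda_nonneg (n : nat) : 0 <= Lambda n.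
Proof.
  apply Rsum_map_nonneg. intros i Hi. apply in_heads in Hi as [Hi Hiq].
  apply Rsum_map_nonneg. intros j _. apply lnt_bounds; [lia | exact Hiq].
Qed.

Lemma Lambda_mul_le (n : nat) : Lambda (q * n) <= Lambda n + INR (q * n) * lnt_max.
Proof.
  rewrite Lambda_mul, length_heads_mul by exact hq.
  assert (Hstep : Rsum_list (map (fun i => Rsum_list (map (lnt i) (seq 1 (depth q n i)))) (heads q n))
                  <= Lambda n + INR (length (heads q n)) * lnt_max).
  { unfold Lambda. rewrite <- Rsum_map_const, <- Rsum_map_plus. apply Rsum_map_le.
    intros i Hi. apply in_heads in Hi as [Hi Hiq]. rewrite Rsum_seq_shift.
    assert (H0 := lnt_bounds i 0 ltac:(lia) Hiq).
    assert (HK := lnt_bounds i (depth q n i) ltac:(lia) Hiq). lra. }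
  assert (Hheads : INR (length (heads q n)) <= INR n) by apply le_INR, length_heads_le.
  destruct ln_t_nil_bounds as [Ht0 HtM].
  rewrite !mult_INR, minus_INR in * by lia. cbn [INR] in *.
  assert (HM : 0 <= lnt_max) by lra. assert (Hq : 2 <= INR q) by (apply (le_INR 2); exact hq).
  assert (INR (length (heads q n)) * lnt_max <= INR n * lnt_max) by (apply Rmult_le_compat_r; lra).
  assert ((INR q - 1) * INR n * ln (t []) <= (INR q - 1) * INR n * lnt_max).
  { apply Rmult_le_compat_l; [apply Rmult_le_pos; [lra | apply pos_INR] | exact HtM]. }
  nra.
Qed.

Lemma Lambda_pow_le (l : nat) : Lambda (q ^ l) <= 2 * lnt_max * INR (q ^ l).
Proof.
  destruct ln_t_nil_bounds as [Ht0 HtM].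
  induction l as [|l IH].
  - unfold Lambda. cbn [Nat.pow]. rewrite heads_one by exact hq.
    cbn [map]. rewrite depth_one by exact hq. cbn. rewrite lnt_nil. lra.
  - rewrite Nat.pow_succ_r'. eapply Rle_trans; [apply Lambda_mul_le|].
    rewrite !mult_INR. assert (Hq : 2 <= INR q) by (apply (le_INR 2); exact hq).
    assert (0 <= INR (q ^ l)) by apply pos_INR.
    assert (0 <= lnt_max * INR (q ^ l) * (INR q - 2)) by (repeat apply Rmult_le_pos; lra).
    nra.
Qed.

Definition scaled_Lambda (l : nat) : R := INR q * Lambda (q ^ l) / (INR (q ^ l) * ln (INR m)).

Lemma ln_m_pos : 0 < ln (INR m).
Proof. rewrite <- ln_1. apply ln_increasing; [lra | apply lt_1_INR; lia]. Qed.

Lemma a_seq_telescopes (l : nat) :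
  a_seq m q Om t x l = scaled_Lambda l - scaled_Lambda (S l) + (INR q - 1) * logb m (t []).
Proof.
  unfold a_seq, scaled_Lambda, logb. rewrite ln_Pmu_prefix_Lambda, Nat.pow_succ_r'.
  rewrite !mult_INR, minus_INR by lia.
  assert (Hn : 0 < INR (q ^ l)) by (apply lt_0_INR, Nat.neq_0_lt_0, Nat.pow_nonzero; lia).
  assert (Hq : 2 <= INR q) by (apply (le_INR 2); exact hq).
  assert (Hm := ln_m_pos). cbn [INR]. field. lra.
Qed.

Lemma scaled_Lambda_bounded (l : nat) : Rabs (scaled_Lambda l) <= 2 * INR q * lnt_max / ln (INR m).
Proof.
  assert (Hn : 0 < INR (q ^ l)) by (apply lt_0_INR, Nat.neq_0_lt_0, Nat.pow_nonzero; lia).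
  assert (Hq : 0 < INR q) by (apply lt_0_INR; lia).
  assert (Hm := ln_m_pos). assert (H0 := Lambda_nonneg (q ^ l)). assert (H1 := Lambda_pow_le l).
  unfold scaled_Lambda. rewrite Rabs_pos_eq.
  - apply (Rmult_le_reg_r (INR (q ^ l) * ln (INR m))); [nra|].
    unfold Rdiv. rewrite Rmult_assoc, Rinv_l by nra.
    replace (2 * INR q * lnt_max * / ln (INR m) * (INR (q ^ l) * ln (INR m)))
      with (INR q * (2 * lnt_max * INR (q ^ l))) by (field; lra).
    nra.
  - apply Rmult_le_pos; [nra | left; apply Rinv_0_lt_compat; nra].
Qed.

End Entropy.

Theorem lemma5p2 (m q : nat) (Om : (nat -> nat) -> Prop) (t : list nat -> R)
  (hm : (2 <= m)%nat) (hq : (2 <= q)%nat)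
  (hOmS : forall w, Om w -> in_Sigma m w)
  (hOmne : exists w, Om w)
  (hOmcl : closed_Sigma m Om)
  (ht : t_condition m q Om t) :
  forall x, X_Om m q Om x ->
    Un_cv (fun l => Rsum_list (map (a_seq m q Om t x) (seq 1 l)) / INR l)
          ((INR q - 1) * logb m (t []))
    /\
    (forall eps, 0 < eps -> forall N : nat, exists l : nat,
        (N <= l)%nat /\ (1 <= l)%nat /\
        a_seq m q Om t x l <= (INR q - 1) * logb m (t []) + eps).
Proof.
  (* The hypotheses on Om only guarantee that such a t exists. *)
  intros x hx.
  assert (Htele := a_seq_telescopes m q Om t x hm hq ht hx).
  assert (Hbound := scaled_Lambda_bounded m q Om t x hm hq ht hx).
  split.
  - exact (cesaro_mean_cv _ _ _ _ Htele Hbound).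
  - exact (frequently_le_limit _ _ _ _ Htele Hbound).
Qed.
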